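(* Let $H$ be a graph with an optimal vector coloring $i\mapsto p_i$, and let $G$ be a graph with $H\subseteq G\subseteq H'(p)$ (all three graphs having vertex set $V(H)$). Then: (i) $i\mapsto p_i$ is an optimal vector coloring of $G$; in particular $\chi_v(H)=\chi_v(G)$. (ii) If $H$ is uniquely vector colorable, then $G$ is uniquely vector colorable, and $i\mapsto p_i$ is the unique optimal vector coloring of $G$ (up to equality of Gram matrices). Moreover, if $\langle p_i,p_j\rangle<-1/(\chi_v(G)-1)$ for some edge $i\sim_G j$, then the optimal vector coloring $i\mapsto p_i$ is not strict for $G$, and thus $\chi_v(G)<\chi_{sv}(G)$.
   Context: A vector $t$-coloring of a graph $G$ ($t\ge2$) is an assignment $i\mapsto p_i$ of unit vectors in some $\mathbb{R}^d$ to $V(G)$ with $\langle p_i,p_j\rangle\le -1/(t-1)$ whenever $i\sim j$; it is strict if equality holds for every edge. $\chi_v(G)$ (resp. $\chi_{sv}(G)$) is the smallest $t\ge 2$ for which a (resp. strict) vector $t$-coloring exists; a vector $\chi_v(G)$-coloring is optimal. $G$ is uniquely vector colorable if any two optimal vector colorings of $G$ have equal Gram matrices. For an optimal vector coloring $i\mapsto p_i$ of $H$, $H'(p)$ is the graph with vertex set $V(H)$ in which distinct $u,v$ are adjacent iff $\langle p_u,p_v\rangle\le -1/(\chi_v(H)-1)$. Subgraph inclusion $H\subseteq G$ means every edge of $H$ is an edge of $G$. *)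

From HB Require Import structures.
From mathcomp Require Import all_boot all_order all_algebra.
From mathcomp Require Import classical_sets reals.
Set Implicit Arguments. Unset Strict Implicit. Unset Printing Implicit Defensive.
Import Order.TTheory GRing.Theory Num.Theory.
Local Open Scope ring_scope.
Local Open Scope classical_set_scope.

Section VC.
Variable R : realType.
Variable V : finType.

Definition dotp (d : nat) (u v : 'rV[R]_d) : R := (u *m v^T) 0 0.

Definition is_graph (e : rel V) : Prop :=
  symmetric e /\ irreflexive e.

Definition vec_coloring (e : rel V) (t : R) (d : nat) (p : V -> 'rV[R]_d) : Prop :=
  (forall i, dotp (p i) (p i) = 1) /\
  (forall i j, e i j -> dotp (p i) (p j) <= - 1 / (t - 1)).

Definition strict_vec_coloring (e : rel V) (t : R) (d : nat) (p : V -> 'rV[R]_d) : Prop :=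
  (forall i, dotp (p i) (p i) = 1) /\
  (forall i j, e i j -> dotp (p i) (p j) = - 1 / (t - 1)).

Definition chi_v (e : rel V) : R :=
  inf [set t : R | 2 <= t /\ exists d (p : V -> 'rV[R]_d), vec_coloring e t p].

Definition chi_sv (e : rel V) : R :=
  inf [set t : R | 2 <= t /\ exists d (p : V -> 'rV[R]_d), strict_vec_coloring e t p].

Definition optimal_vec_coloring (e : rel V) (d : nat) (p : V -> 'rV[R]_d) : Prop :=
  vec_coloring e (chi_v e) p.

Definition uniquely_vector_colorable (e : rel V) : Prop :=
  forall d1 (p1 : V -> 'rV[R]_d1) d2 (p2 : V -> 'rV[R]_d2),
    optimal_vec_coloring e p1 -> optimal_vec_coloring e p2 ->
    forall i j, dotp (p1 i) (p1 j) = dotp (p2 i) (p2 j).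

Definition Hprime (e : rel V) (d : nat) (p : V -> 'rV[R]_d) : rel V :=
  fun u v => (u != v) && (dotp (p u) (p v) <= - 1 / (chi_v e - 1)).

Definition subgraph (e1 e2 : rel V) : Prop := forall i j, e1 i j -> e2 i j.

End VC.

(* Part (i) holds because p still vector-colors G at level chi_v(H), while every
   vector coloring of G also colors its subgraph H.  Any configuration of |V| vectors has a copy with
   the same Gram matrix in R^|V| (rotate a vector orthogonal to all of them onto an
   axis and drop that axis), so strict vector colorings may be sought in the compact
   set of unit configurations of R^|V| with a common edge inner product; minimising
   that inner product yields a strict coloring m attaining chi_sv(G).  If
   chi_sv(G) = chi_v(G), then m is an optimal vector coloring, so by uniqueness it has
   the Gram matrix of p; but m is tight on every edge and p is not. *)

From HB Require Import structures.
From mathcomp Require Import all_boot all_order all_algebra.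
From mathcomp Require Import boolp classical_sets reals.
From mathcomp Require Import topology normedtype derive.
From mathcomp Require Import ring lra.
Import Order.TTheory GRing.Theory Num.Theory numFieldNormedType.Exports.
Local Open Scope ring_scope.
Local Open Scope classical_set_scope.

Section InnerProduct.
Context {R : realType} {n : nat}.
Implicit Types u v w : 'rV[R]_n.

Lemma dotpE u v : dotp u v = \sum_l u 0 l * v 0 l.
Proof. by rewrite /dotp !mxE; apply: eq_bigr => l _; rewrite mxE. Qed.

Lemma dotpC u v : dotp u v = dotp v u.
Proof. by rewrite !dotpE; apply: eq_bigr => l _; rewrite mulrC. Qed.

Lemma dotpDl u v w : dotp (u + v) w = dotp u w + dotp v w.
Proof. by rewrite /dotp mulmxDl mxE. Qed.

Lemma dotpZl a u w : dotp (a *: u) w = a * dotp u w.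
Proof. by rewrite /dotp -scalemxAl mxE. Qed.

Lemma dotpBl u v w : dotp (u - v) w = dotp u w - dotp v w.
Proof. by rewrite dotpDl -scaleN1r dotpZl mulN1r. Qed.

Lemma dotpZr a u w : dotp w (a *: u) = a * dotp w u.
Proof. by rewrite dotpC dotpZl dotpC. Qed.

Lemma dotpBr u v w : dotp w (u - v) = dotp w u - dotp w v.
Proof. by rewrite dotpC dotpBl !(dotpC w). Qed.

Lemma dotp0l u : dotp 0 u = 0.
Proof. by rewrite /dotp mul0mx mxE. Qed.

Lemma dotp0r u : dotp u 0 = 0.
Proof. by rewrite dotpC dotp0l. Qed.

Lemma sqr_coord_le_dotp u l : u 0 l ^+ 2 <= dotp u u.
Proof.
rewrite dotpE (bigD1 l) //= -expr2 lerDl.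
by apply: sumr_ge0 => k _; rewrite -expr2 sqr_ge0.
Qed.

Lemma dotp_ge0 u : 0 <= dotp u u.
Proof. by rewrite dotpE; apply: sumr_ge0 => l _; rewrite -expr2 sqr_ge0. Qed.

Lemma dotp_eq0 u : (dotp u u == 0) = (u == 0).
Proof.
apply/eqP/eqP=> [uu0|->]; last by rewrite dotp0r.
apply/rowP => l; rewrite mxE; apply/eqP; rewrite -sqrf_eq0 eq_le sqr_ge0 andbT.
by rewrite -uu0 sqr_coord_le_dotp.
Qed.

Lemma dotp_unit_geN1 u v : dotp u u = 1 -> dotp v v = 1 -> -1 <= dotp u v.
Proof.
move=> uu vv; have := dotp_ge0 (u + v).
rewrite dotpDl ![dotp _ (u + v)]dotpC !dotpDl uu vv (dotpC v u); lra.
Qed.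

Lemma dotp_mulmx {m} {A : 'M[R]_(n, m)} :
  A *m A^T = 1%:M -> forall u v, dotp (u *m A) (v *m A) = dotp u v.
Proof. by move=> AAT u v; rewrite /dotp trmx_mul !mulmxA -(mulmxA u) AAT mulmx1. Qed.

Lemma dotp_delta_mx u l : dotp u (delta_mx 0 l) = u 0 l.
Proof.
rewrite dotpE (bigD1 l) //= big1 ?addr0; first by rewrite !mxE !eqxx mulr1.
by move=> k /negPf kl; rewrite !mxE kl andbF mulr0.
Qed.

End InnerProduct.

Lemma dotp_row_mx (R : realType) m n (a c : 'rV[R]_m) (b e : 'rV[R]_n) :
  dotp (row_mx a b) (row_mx c e) = dotp a c + dotp b e.
Proof. by rewrite /dotp tr_row_mx mul_row_col mxE. Qed.

Section Isometries.
Context {R : realType}.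

Lemma isometry_embedding {m n} : (m <= n)%N ->
  exists E : 'M[R]_(m, n), E *m E^T = 1%:M.
Proof.
move=> le_mn; exists (\matrix_(a, b) ((a : nat) == b)%:R).
apply/matrixP => a b; rewrite !mxE (bigD1 (widen_ord le_mn a)) //= big1 ?addr0.
  by rewrite !mxE /= eqxx mul1r eq_sym.
move=> l /negP la; rewrite !mxE; case: eqP => [al|]; last by rewrite mul0r.
by case: la; apply/eqP/val_inj.
Qed.

(* The reflection in the hyperplane orthogonal to [a - b]. *)
Lemma reflection_exists n (a b : 'rV[R]_n) : dotp a a = dotp b b ->
  exists2 U : 'M[R]_n, U *m U^T = 1%:M & a *m U = b.
Proof.
move=> ab; set u := a - b; set s := dotp u u.
have [s0|s_neq0] := eqVneq s 0.
  exists 1%:M; first by rewrite trmx1 mulmx1.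
  by rewrite mulmx1; apply/eqP; rewrite -subr_eq0 -dotp_eq0; apply/eqP.
set P := u^T *m u.
have PP : P *m P = s *: P.
  by rewrite /P mulmxA -(mulmxA _ u) [u *m _]mx11_scalar mul_mx_scalar scalemxAl.
have PT : P^T = P by rewrite /P trmx_mul trmxK.
set k := 2 / s; exists (1%:M - k *: P).
  have -> : (1%:M - k *: P)^T = 1%:M - k *: P.
    by apply/matrixP => i j; rewrite -[in RHS]PT !mxE eq_sym.
  rewrite mulmxBl !mulmxBr mul1mx mulmx1.
  rewrite -!scalemxAl -!scalemxAr PP !scalerA mul1mx.
  have -> : k * k * s = k + k by rewrite /k; field.
  by rewrite scalerDl opprB addrK subrK.
have s_au : s = 2 * dotp a u by rewrite /s /u !dotpBl !dotpBr -ab (dotpC b a); ring.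
have au_neq0 : dotp a u != 0 by apply: contraNneq s_neq0 => au0; rewrite s_au au0 mulr0.
rewrite mulmxBr mulmx1 -scalemxAr /P mulmxA [a *m _]mx11_scalar -/(dotp a u).
rewrite mul_scalar_mx scalerA.
have -> : k * dotp a u = 1 by rewrite /k s_au; field.
by rewrite scale1r /u opprB addrCA subrr addr0.
Qed.

End Isometries.

Section DimensionReduction.
Context {R : realType} {V : finType}.

Definition same_gram {d1 d2} (p : V -> 'rV[R]_d1) (q : V -> 'rV[R]_d2) :=
  forall i j, dotp (p i) (p j) = dotp (q i) (q j).

Lemma exists_orthogonal {d} (q : V -> 'rV[R]_d) : (#|V| < d)%N ->
  exists2 w : 'rV[R]_d, w != 0 & forall i, dotp (q i) w = 0.
Proof.
move=> ltVd; pose Q : 'M[R]_(#|V|, d) := \matrix_(a, l) q (enum_val a) 0 l.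
have : kermx Q^T != 0.
  rewrite -mxrank_eq0 mxrank_ker mxrank_tr subn_eq0 -ltnNge.
  exact: leq_ltn_trans (rank_leq_row Q) ltVd.
case/rowV0Pn => w /sub_kermxP wQ w_neq0; exists w => // i.
have := congr1 (fun X : 'rV_#|V| => X 0 (enum_rank i)) wQ.
rewrite !mxE => wQi; rewrite dotpE -[RHS]wQi; apply: eq_bigr => l _.
by rewrite !mxE enum_rankK mulrC.
Qed.

Lemma same_gram_drop_dim {d} (q : V -> 'rV[R]_d.+1) : (#|V| < d.+1)%N ->
  exists q' : V -> 'rV[R]_d, same_gram q' q.
Proof.
move=> ltVd; have [w w_neq0 qw0] := exists_orthogonal q ltVd.
pose c : 'rV[R]_1 := (Num.sqrt (dotp w w))%:M.
have c_neq0 : c 0 0 != 0.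
  by rewrite mxE eqxx mulr1n sqrtr_eq0 -ltNge lt0r dotp_eq0 w_neq0 dotp_ge0.
have [U UUT wU] : exists2 U : 'M[R]_(1 + d), U *m U^T = 1%:M & w *m U = row_mx c 0.
  apply: reflection_exists; rewrite dotp_row_mx dotp0r addr0 [dotp c c]dotpE.
  by rewrite big_ord1 !mxE eqxx mulr1n -expr2 sqr_sqrtr ?dotp_ge0.
exists (fun i => rsubmx (q i *m U : 'rV_(1 + d))) => i j.
have first0 k : lsubmx (q k *m U : 'rV_(1 + d)) = 0.
  have qkw := qw0 k.
  rewrite -(dotp_mulmx UUT) wU -[q k *m U]hsubmxK dotp_row_mx dotp0r addr0 in qkw.
  move: qkw; rewrite dotpE big_ord1 => /eqP; rewrite mulf_eq0 (negPf c_neq0) orbF.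
  by move=> l0; apply/rowP => l; rewrite ord1 [RHS]mxE; apply/eqP.
transitivity (dotp (q i *m U) (q j *m U)); last exact: dotp_mulmx.
rewrite -[in RHS](hsubmxK (q i *m U : 'rV_(1 + d))).
rewrite -[in RHS](hsubmxK (q j *m U : 'rV_(1 + d))).
by rewrite dotp_row_mx first0 dotp0l add0r.
Qed.

Lemma same_gram_embed {d n} (q : V -> 'rV[R]_d) : (d <= n)%N ->
  exists q' : V -> 'rV[R]_n, same_gram q' q.
Proof.
case/(isometry_embedding (R := R)) => E EET.
by exists (fun i => q i *m E) => i j; exact: dotp_mulmx.
Qed.

Lemma same_gram_realization {n d} (q : V -> 'rV[R]_d) : (#|V| <= n)%N ->
  exists q' : V -> 'rV[R]_n, same_gram q' q.
Proof.
move=> leVn; elim: d q => [|d IHd] q; first exact: same_gram_embed.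
have [le_dn|lt_nd] := leqP d.+1 n; first exact: same_gram_embed.
have [q1 q1q] := same_gram_drop_dim q (leq_ltn_trans leVn lt_nd).
by have [q2 q2q1] := IHd q1; exists q2 => i j; rewrite q2q1 q1q.
Qed.

End DimensionReduction.

Lemma closed_eqfun {R : realType} {T : topologicalType} (f g : T -> R) :
  continuous f -> continuous g -> closed [set x | f x = g x].
Proof.
move=> cf cg; have -> : [set x | f x = g x] = (f \- g) @^-1` [set 0].
  apply/seteqP; split=> x /= fgx; first by rewrite fgx subrr.
  by apply/eqP; rewrite -subr_eq0; apply/eqP.
apply: preimage_closed; last exact: closed_eq.
by move=> x _; exact: (continuousB (cf x) (cg x)).
Qed.

Section EdgeUniformMinimum.
Context {R : realType} {V : finType}.
Variables (G : rel V) (i0 j0 : V).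
Local Notation N := #|V|.

(* Strict vector colorings with the threshold left free. *)
Definition edge_uniform {d} (q : V -> 'rV[R]_d) :=
  (forall i, dotp (q i) (q i) = 1) /\
  (forall i j, G i j -> dotp (q i) (q j) = dotp (q i0) (q j0)).

(* Configurations in R^N are coded as points of R^(N * N), where [rV_compact] applies. *)
Definition unpack (x : 'rV[R]_(N * N)) (i : V) : 'rV[R]_N :=
  \row_l x 0 (mxvec_index (enum_rank i) l).

Definition pack (q : V -> 'rV[R]_N) : 'rV[R]_(N * N) :=
  mxvec (\matrix_(a, l) q (enum_val a) 0 l).

Lemma packK q i : unpack (pack q) i = q i.
Proof. by apply/rowP => l; rewrite !mxE mxvecE mxE enum_rankK. Qed.

Definition gram_entry i j (x : 'rV[R]_(N * N)) := dotp (unpack x i) (unpack x j).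

Lemma continuous_gram_entry i j : continuous (gram_entry i j).
Proof.
have -> : gram_entry i j = fun x => \sum_(l < N)
    x 0 (mxvec_index (enum_rank i) l) * x 0 (mxvec_index (enum_rank j) l).
  by apply: funext => x; rewrite /gram_entry dotpE; apply: eq_bigr => l _; rewrite !mxE.
apply: continuous_big; first exact: add_continuous.
move=> l _ x; apply: continuousM; exact: coord_continuous.
Qed.

Lemma closed_edge_uniform : closed [set x | edge_uniform (unpack x)].
Proof.
have -> : [set x | edge_uniform (unpack x)] =
    \bigcap_(i in setT) [set x | gram_entry i i x = 1] `&`
    \bigcap_(e in [set e : V * V | G e.1 e.2])
      [set x | gram_entry e.1 e.2 x = gram_entry i0 j0 x].
  apply/seteqP; split=> x [x1 xe].
    by split=> [i _|e Ge]; [exact: x1|exact: xe].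
  by split=> [i|i j Gij]; [exact: x1|exact: (xe (i, j))].
apply: closedI; apply: closed_bigI => *;
  apply: closed_eqfun; (exact: continuous_gram_entry || exact: cst_continuous).
Qed.

Lemma compact_edge_uniform : compact [set x | edge_uniform (unpack x)].
Proof.
have cube : compact [set x : 'rV[R]_(N * N) | forall c, `[-1, 1]%classic (x 0 c)].
  apply: (@rV_compact R (N * N) (fun=> `[-1, 1]%classic)).
  by move=> _; exact: segment_compact.
apply: subclosed_compact closed_edge_uniform cube _ => x [x1 _] c /=.
case/mxvec_indexP: c => a l; have := sqr_coord_le_dotp (unpack x (enum_val a)) l.
rewrite x1 !mxE enum_valK in_itv /= => sqr_le1.
by apply/andP; split; nra.
Qed.

Lemma edge_uniform_min {q0 : V -> 'rV[R]_N} : edge_uniform q0 ->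
  exists2 m : V -> 'rV[R]_N, edge_uniform m &
    forall q : V -> 'rV[R]_N, edge_uniform q ->
      dotp (m i0) (m j0) <= dotp (q i0) (q j0).
Proof.
have edge_uniform_pack q : edge_uniform q -> edge_uniform (unpack (pack q)).
  by move=> [q1 qe]; split=> [i|i j Gij]; rewrite !packK; [exact: q1|exact: qe].
move=> /edge_uniform_pack uq0.
have [x] := EVT_min_rV (ex_intro _ (pack q0) uq0) compact_edge_uniform
  (continuous_subspaceT (continuous_gram_entry i0 j0)).
rewrite inE => ux xmin; exists (unpack x) => // q /edge_uniform_pack uq.
by have := xmin _ (mem_set uq); rewrite /gram_entry !packK.
Qed.

End EdgeUniformMinimum.

(* The vertices of a regular simplex centred at the origin. *)
Lemma simplex_gram {R : realType} {V : finType} n : (1 < n)%N -> (#|V| <= n)%N ->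
  exists q : V -> 'rV[R]_n, forall i j,
    dotp (q i) (q j) = if i == j then 1 else -1 / (n%:R - 1).
Proof.
move=> n_gt1 leVn; set m : R := n%:R.
have m_gt1 : 1 < m by rewrite ltr1n.
pose k := Num.sqrt (m / (m - 1)).
have kk : k * k = m / (m - 1) by rewrite -expr2 sqr_sqrtr // divr_ge0 //; lra.
pose one : 'rV[R]_n := const_mx 1.
have ee a b : dotp (delta_mx 0 a : 'rV[R]_n) (delta_mx 0 b) = (a == b)%:R.
  by rewrite dotp_delta_mx !mxE eqxx eq_sym.
have e1 a : dotp (delta_mx 0 a) one = 1 by rewrite dotpC dotp_delta_mx mxE.
have oo : dotp one one = m.
  by rewrite dotpE (eq_bigr (fun=> 1)) ?sumr_const ?card_ord // => l _; rewrite mxE mulr1.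
exists (fun i => k *: (delta_mx 0 (widen_ord leVn (enum_rank i)) - m^-1 *: one)) => i j.
rewrite dotpZl dotpZr !dotpBl !dotpBr !dotpZl !dotpZr ee e1 (dotpC one) e1 oo mulrA kk.
rewrite -val_eqE /= val_eqE (inj_eq enum_rank_inj).
have m_neq0 : m != 0 by rewrite gt_eqF // (lt_trans ltr01).
have m1_neq0 : m - 1 != 0 by rewrite subr_eq0 gt_eqF.
by case: eqP => _; rewrite ?mulr1n ?mulr0n; field; rewrite m_neq0 m1_neq0.
Qed.

Section Threshold.
Context {R : realType}.
Implicit Types s t : R.

Lemma threshold_lt0 t : 1 < t -> -1 / (t - 1) < 0.
Proof. by move=> t_gt1; rewrite mulN1r oppr_lt0 invr_gt0 subr_gt0. Qed.

Lemma threshold_inv s : s != 0 -> -1 / ((1 - s^-1) - 1) = s.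
Proof. by move=> s_neq0; rewrite addrAC subrr add0r invrN invrK mulN1r opprK. Qed.

Lemma threshold_ge2 s : -1 <= s -> s < 0 -> 2 <= 1 - s^-1.
Proof.
move=> s_geN1 s_lt0; have ss : s * s^-1 = 1 by rewrite mulfV // lt_eqF.
have s_inv_lt0 : s^-1 < 0 by rewrite invr_lt0.
nra.
Qed.

Lemma ler_threshold s t : 1 < s -> 1 < t -> (-1 / (s - 1) <= -1 / (t - 1)) = (s <= t).
Proof.
move=> s_gt1 t_gt1; rewrite !mulN1r lerN2 lef_pV2 ?posrE ?subr_gt0 //.
by rewrite lerD2r.
Qed.

End Threshold.

Lemma inf_eq_min {R : realType} (E : set R) x : E x -> lbound E x -> inf E = x.
Proof.
move=> Ex lbx; apply/eqP; rewrite eq_le lb_le_inf ?andbT //; last by exists x.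
by apply: ge_inf => //; exists x.
Qed.

Section VectorChromatic.
Context {R : realType} {V : finType}.
Implicit Types G H : rel V.

Lemma vec_coloring_of_strict {G t d} {q : V -> 'rV[R]_d} :
  strict_vec_coloring G t q -> vec_coloring G t q.
Proof. by move=> [qu qe]; split=> // i j /qe ->. Qed.

Lemma vec_coloring_subgraph {H G t d} {q : V -> 'rV[R]_d} :
  subgraph H G -> vec_coloring G t q -> vec_coloring H t q.
Proof. by move=> HG [qu qe]; split=> // i j /HG /qe. Qed.

Lemma same_gram_strict {G t d1 d2} {p : V -> 'rV[R]_d1} {q : V -> 'rV[R]_d2} :
  same_gram p q -> strict_vec_coloring G t q -> strict_vec_coloring G t p.
Proof. by move=> pq [qu qe]; split=> [i|i j /qe]; rewrite pq. Qed.

Lemma strict_edge_uniform {G i0 j0 t d} {q : V -> 'rV[R]_d} : G i0 j0 ->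
  strict_vec_coloring G t q -> edge_uniform G i0 j0 q.
Proof. by move=> Gi0j0 [qu qe]; split=> // i j /qe ->; rewrite qe. Qed.

Lemma strict_colorable {G} : is_graph G ->
  exists t d (q : V -> 'rV[R]_d), 2 <= t /\ strict_vec_coloring G t q.
Proof.
move=> [_ G_irr]; set n := maxn 2 #|V|.
have [q qq] := simplex_gram (R := R) n (leq_maxl 2 #|V|) (leq_maxr 2 #|V|).
exists n%:R, n, q; split; first by rewrite ler_nat leq_maxl.
split=> [i|i j Gij]; rewrite qq ?eqxx //.
by case: eqP Gij => [->|//]; rewrite G_irr.
Qed.

Lemma chi_v_le {G t d} {q : V -> 'rV[R]_d} : 2 <= t -> vec_coloring G t q ->
  chi_v R G <= t.
Proof. by move=> t2 qt; apply: ge_inf; [exists 2 => ? [] | split=> //; exists d, q]. Qed.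

Lemma chi_v_ge2 {G} : is_graph G -> 2 <= chi_v R G.
Proof.
case/strict_colorable => t [d [q [t2 /vec_coloring_of_strict qt]]].
by apply: lb_le_inf => [|? []//]; exists t; split=> //; exists d, q.
Qed.

Lemma chi_sv_ge2 {G} : is_graph G -> 2 <= chi_sv R G.
Proof.
case/strict_colorable => t [d [q [t2 qt]]].
by apply: lb_le_inf => [|? []//]; exists t; split=> //; exists d, q.
Qed.

Lemma chi_v_subgraph_eq {H G d} {p : V -> 'rV[R]_d} : is_graph H -> subgraph H G ->
  vec_coloring G (chi_v R H) p -> chi_v R G = chi_v R H.
Proof.
move=> gH HG pG; apply: inf_eq_min; first by split; [exact: chi_v_ge2|exists d, p].
by move=> t [t2 [d' [q /(vec_coloring_subgraph HG) qH]]]; exact: chi_v_le qH.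
Qed.

Lemma chi_sv_attained {G i0 j0} : is_graph G -> G i0 j0 ->
  exists m : V -> 'rV[R]_#|V|, strict_vec_coloring G (chi_sv R G) m.
Proof.
move=> gG Gi0j0.
have realize t d (q : V -> 'rV[R]_d) : strict_vec_coloring G t q ->
    exists q' : V -> 'rV[R]_#|V|, strict_vec_coloring G t q'.
  have [q' q'q] := same_gram_realization q (leqnn #|V|).
  by move=> qt; exists q'; exact: same_gram_strict qt.
have [t0 [d [q0 [t0_ge2 /realize [q1 q1t0]]]]] := strict_colorable gG.
have [m [mu me] mmin] := edge_uniform_min G i0 j0 (strict_edge_uniform Gi0j0 q1t0).
set s := dotp (m i0) (m j0) in me mmin.
have s_lt0 : s < 0.
  apply: le_lt_trans (mmin _ (strict_edge_uniform Gi0j0 q1t0)) _.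
  by rewrite q1t0.2 //; apply: threshold_lt0; lra.
have s_neq0 : s != 0 by rewrite lt_eqF.
have ts_ge2 : 2 <= 1 - s^-1 by apply: threshold_ge2 s_lt0; exact: dotp_unit_geN1.
have m_strict : strict_vec_coloring G (1 - s^-1) m.
  by split=> // i j Gij; rewrite threshold_inv // me.
exists m; suff -> : chi_sv R G = 1 - s^-1 by [].
apply: inf_eq_min; first by split=> //; exists #|V|, m.
move=> t [t_ge2 [d' [q /realize [q' q't]]]].
have := mmin _ (strict_edge_uniform Gi0j0 q't).
by rewrite q't.2 // -[s in s <= _]threshold_inv // ler_threshold //; lra.
Qed.

Lemma chi_v_lt_chi_sv {G i0 j0} : is_graph G -> G i0 j0 ->
  (forall d (q : V -> 'rV[R]_d), optimal_vec_coloring G q ->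
     dotp (q i0) (q j0) < -1 / (chi_v R G - 1)) ->
  chi_v R G < chi_sv R G.
Proof.
move=> gG Gi0j0 slack; have [m m_strict] := chi_sv_attained gG Gi0j0.
have m_col := vec_coloring_of_strict m_strict.
rewrite lt_neqAle (chi_v_le (chi_sv_ge2 gG) m_col) andbT.
apply/eqP => chi_eq; have := slack _ m; rewrite /optimal_vec_coloring chi_eq.
by move=> /(_ m_col); rewrite m_strict.2 // ltxx.
Qed.

End VectorChromatic.

Theorem theorem3p12 (R : realType) (V : finType) (H G : rel V)
  (d : nat) (p : V -> 'rV[R]_d) :
  is_graph H -> is_graph G ->
  optimal_vec_coloring H p ->
  subgraph H G -> subgraph G (Hprime H p) ->
  (optimal_vec_coloring G p /\ chi_v R H = chi_v R G) /\
  (uniquely_vector_colorable R H ->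
     uniquely_vector_colorable R G /\
     (forall d' (q : V -> 'rV[R]_d'), optimal_vec_coloring G q ->
        forall i j, dotp (q i) (q j) = dotp (p i) (p j)) /\
     ((exists i j, G i j /\ dotp (p i) (p j) < - 1 / (chi_v R G - 1)) ->
        ~ strict_vec_coloring G (chi_v R G) p /\ chi_v R G < chi_sv R G)).
Proof.
move=> gH gG pH HG GHp.
have pG : vec_coloring G (chi_v R H) p.
  by split=> [|i j /GHp /andP[]]; first exact: pH.1.
have chiGH := chi_v_subgraph_eq gH HG pG.
have optH d' (q : V -> 'rV[R]_d') : optimal_vec_coloring G q -> optimal_vec_coloring H q.
  by rewrite /optimal_vec_coloring chiGH; exact: vec_coloring_subgraph.
split; first by rewrite /optimal_vec_coloring chiGH.
move=> uH.
have gram_p d' (q : V -> 'rV[R]_d') : optimal_vec_coloring G q ->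
    forall i j, dotp (q i) (q j) = dotp (p i) (p j).
  by move=> /optH qH; exact: uH qH pH.
split; first by move=> d1 p1 d2 p2 /optH p1H /optH p2H; exact: uH.
split=> // -[i0 [j0 [Gi0j0 p_slack]]]; split.
  by move=> [_ p_tight]; move: p_slack; rewrite p_tight // ltxx.
by apply: chi_v_lt_chi_sv gG Gi0j0 _ => d' q /gram_p ->.
Qed.
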